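(* Let $\Omega$ be a topological space, $X$ a locally convex topological vector space with defining family of seminorms $\mathfrak{A}$, and $X_0$ a dense linear subspace of $X$. If $\Omega$ is paracompact and Hausdorff, or $X$ is separable, then for each $\epsilon > 0$, $p \in \mathfrak{A}$ and $f \in C(\Omega, X)$ there is $g \in C(\Omega, X_0)$ such that $\sup_{t\in\Omega} p(f(t) - g(t)) < \epsilon$. *)

From HB Require Import structures.
From mathcomp Require Import all_boot all_order all_algebra.
From mathcomp Require Import all_classical all_reals all_analysis.
Set Implicit Arguments. Unset Strict Implicit. Unset Printing Implicit Defensive.
Import Order.TTheory GRing.Theory Num.Theory.
Local Open Scope classical_set_scope.
Local Open Scope ring_scope.

Definition seminorm (R : realType) (X : lmodType R) (p : X -> R) : Prop :=
  (forall x, 0 <= p x) /\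
  (forall x y, p (x + y) <= p x + p y) /\
  (forall (a : R) x, p (a *: x) = `|a| * p x).

Definition defining_seminorms (R : realType) (X : tvsType R)
  (A : set (X -> R)) : Prop :=
  (forall p, A p -> seminorm p) /\
  (forall (x : X) (U : set X),
     nbhs x U <->
     exists (F : set (X -> R)) (e : R),
       [/\ finite_set F, F `<=` A, 0 < e &
           [set y | forall p, F p -> p (y - x) < e] `<=` U]).

Definition linear_subspace (R : realType) (X : lmodType R) (S : set X) : Prop :=
  [/\ S 0, (forall x y, S x -> S y -> S (x + y)) &
      (forall (a : R) x, S x -> S (a *: x))].

Definition paracompact (T : topologicalType) : Prop :=
  forall C : set (set T),
    (forall U, C U -> open U) -> \bigcup_(U in C) U = setT ->
    exists D : set (set T),
      [/\ (forall V, D V -> open V),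
          \bigcup_(V in D) V = setT,
          (forall V, D V -> exists2 U, C U & V `<=` U) &
          (forall x : T, exists N, nbhs x N /\
              finite_set [set V | D V /\ V `&` N !=set0])].

Definition separable (T : topologicalType) : Prop :=
  exists D : set T, countable D /\ dense D.

From HB Require Import structures.
From mathcomp Require Import all_boot all_order all_algebra.
From mathcomp Require Import all_classical all_reals all_analysis.
From mathcomp Require Import wochoice ring lra.
Import Order.TTheory GRing.Theory Num.Theory.
Import numFieldTopology.Exports numFieldNormedType.Exports.
Local Open Scope classical_set_scope.
Local Open Scope ring_scope.

(* It suffices to find a
   continuous map g0 : X -> X with values in X0 and p (x - g0 x) <= eps / 2,
   and to take g = g0 \o f.  By density the p-balls of radius r = eps / 2
   centred at points of X0 cover X.  M. E. Rudin's proof of Stone's theorem,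
   run for the pseudometric p (x - y) with a well-ordering of X, refines this
   cover into p-open cells, only finitely many of which meet some p-ball
   around any given point.  The
   functions min(1, p-distance to the complement of a cell) are continuous and
   add up, after normalisation, to a locally finite partition of unity; g0 x is
   the corresponding convex combination of the centres of the cells. *)

Set Implicit Arguments.
Unset Strict Implicit.
Unset Printing Implicit Defensive.

Section Seminorm.
Context (R : realType) (X : lmodType R) (p : X -> R).
Hypothesis p_seminorm : seminorm p.

Lemma seminorm_ge0 x : 0 <= p x. Proof. by case: p_seminorm. Qed.

Lemma seminormD x y : p (x + y) <= p x + p y.
Proof. by case: p_seminorm => _ []. Qed.

Lemma seminormZ a x : p (a *: x) = `|a| * p x.
Proof. by case: p_seminorm => _ []. Qed.

Lemma seminorm0 : p 0 = 0.
Proof. by rewrite -(scale0r (0 : X)) seminormZ normr0 mul0r. Qed.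

Lemma seminormN x : p (- x) = p x.
Proof. by rewrite -scaleN1r seminormZ normrN normr1 mul1r. Qed.

Lemma seminorm_distC x y : p (x - y) = p (y - x).
Proof. by rewrite -seminormN opprB. Qed.

Lemma seminorm_distD y x z : p (x - z) <= p (x - y) + p (y - z).
Proof. by have := seminormD (x - y) (y - z); rewrite addrA subrK. Qed.

Lemma seminorm_sum (I : Type) (s : seq I) (F : I -> X) :
  p (\sum_(i <- s) F i) <= \sum_(i <- s) p (F i).
Proof.
elim: s => [|i s IHs]; first by rewrite !big_nil seminorm0.
by rewrite !big_cons (le_trans (seminormD _ _)) // lerD2l.
Qed.

End Seminorm.

Section WellOrder.
Context (T : eqType).

Definition wo_le : rel T := sval (well_ordering_principle T).

Let wo_le_well_order : well_order wo_le := svalP (well_ordering_principle T).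

Lemma wo_le_min (A : set T) : A !=set0 ->
  exists2 z, A z & forall y, A y -> wo_le z y.
Proof.
case=> x Ax; have [|z [[zA zlb] _]] := @wo_le_well_order [pred y | `[< A y >]].
  by exists x; rewrite inE.
exists z; first by move: zA; rewrite inE.
by move=> y Ay; apply: zlb; rewrite inE.
Qed.

Let pair (x y : T) : pred T := [pred w | (w == x) || (w == y)].

Lemma wo_le_total x y : wo_le x y \/ wo_le y x.
Proof.
have [|z [[]]] := @wo_le_well_order (pair x y); first by exists x; rewrite /= inE eqxx.
rewrite inE => /orP[]/eqP-> zlb _; [left|right]; apply: zlb; by rewrite inE eqxx ?orbT.
Qed.

Lemma wo_le_anti x y : wo_le x y -> wo_le y x -> x = y.
Proof.
move=> lexy leyx.
have wo_le_refl z : wo_le z z by case: (wo_le_total z z).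
have [|z [_ zuniq]] := @wo_le_well_order (pair x y); first by exists x; rewrite /= inE eqxx.
rewrite -(zuniq x) ?(zuniq y) //.
  by split; [rewrite inE eqxx orbT | move=> w; rewrite inE => /orP[]/eqP->].
by split; [rewrite inE eqxx | move=> w; rewrite inE => /orP[]/eqP->].
Qed.

End WellOrder.

Section RudinCover.
Context (R : realType) (X : lmodType R) (p : X -> R) (X0 : set X) (r : R).
Hypotheses (p_seminorm : seminorm p) (r_gt0 : 0 < r).
Hypothesis X0_net : forall x, exists2 t, X0 t & p (x - t) < r.

Let distC := seminorm_distC p_seminorm.
Let distD := seminorm_distD p_seminorm.

Let rho n := r / 2 ^+ n.

Let rho_gt0 n : 0 < rho n.
Proof. by rewrite divr_gt0 // exprn_gt0. Qed.

Let rho_halfS n : rho n.+1 + rho n.+1 = rho n.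
Proof. by rewrite /rho exprS; field; rewrite expf_neq0. Qed.

Let rho_le m n : (m <= n)%N -> rho n <= rho m.
Proof.
move=> /subnK <-; elim: (n - m)%N => [|k IHk] //=.
by rewrite addSn (le_trans _ IHk) // -[leRHS]rho_halfS lerDr ltW.
Qed.

Let rho_small d : 0 < d -> exists n, rho n < d.
Proof.
move=> d_gt0; pose b := Num.Def.archi_bound (r / d).
have rd_lt : r / d < b%:R by apply: archi_boundP; rewrite divr_ge0 // ltW.
exists b; rewrite /rho ltr_pdivrMr ?exprn_gt0 // -ltr_pdivrMl // mulrC.
by rewrite (lt_le_trans rd_lt) // -natrX ler_nat ltnW // ltn_expl.
Qed.

Definition least_net_point (t x : X) :=
  [/\ X0 t, p (x - t) < r & forall u, X0 u -> p (x - u) < r -> wo_le t u].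

(* The sets E_{n,t} of M. E. Rudin's proof of Stone's theorem, for the cover
   of X by the balls of radius r centred at the points of X0. *)
Definition cell_of (C : set X) (t : X) (n : nat) : set X :=
  [set y | exists2 c, [/\ least_net_point t c, p (c - t) < r - 3 * rho n & ~ C c]
                    & p (y - c) < rho n].

Fixpoint covered (n : nat) : set X :=
  if n is m.+1 then covered m `|` [set y | exists t, cell_of (covered m) t m y]
  else set0.

Definition cell (t : X) (n : nat) : set X := cell_of (covered n) t n.

Lemma coveredP n y : covered n y <-> exists m t, (m < n)%N /\ cell t m y.
Proof.
elim: n => [|n IHn] /=; first by split => // -[m [t []]].
split=> [[/IHn [m [t [mn ytm]]]|[t ytn]]|[m [t []]]].
- by exists m, t; split => //; exact: ltnW.
- by exists n, t.
rewrite ltnS leq_eqVlt => /orP[/eqP-> ytn|mn ytm]; first by right; exists t.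
by left; apply/IHn; exists m, t.
Qed.

Lemma cell_sub_ball t n y : cell t n y -> X0 t /\ p (y - t) < r.
Proof.
case=> c [[X0t _ _] ct _] yc; split => //.
by have := distD c y t; have := rho_gt0 n; lra.
Qed.

Lemma cell_open t n y :
  cell t n y -> exists2 d, 0 < d & forall z, p (z - y) < d -> cell t n z.
Proof.
case=> c c_center yc; exists (rho n - p (y - c)); first by rewrite subr_gt0.
by move=> z zy; exists c => //; have := distD y z c; lra.
Qed.

Lemma cells_cover x : exists t n, cell t n x.
Proof.
have [t [X0t xt] t_min] : exists2 t, X0 t /\ p (x - t) < r &
    forall u, X0 u /\ p (x - u) < r -> wo_le t u.
  by apply: wo_le_min; have [t X0t xt] := X0_net x; exists t.
have [n rho_lt] : exists n, rho n < (r - p (x - t)) / 3.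
  by apply: rho_small; rewrite divr_gt0 // subr_gt0.
have [/coveredP [m [s [_ xsm]]]|x_uncovered] := pselect (covered n x).
  by exists s, m.
exists t, n; exists x; last by rewrite subrr seminorm0.
split => //; last lra.
by split => // u X0u xu; apply: t_min.
Qed.

(* The margin [3 * rho i] absorbs the three short steps from [t] to the centre
   of the cell of [z], so that centre is within [r] of [t]. *)
Let cell_index_le t u i y z :
  cell t i y -> cell u i z -> p (y - z) < rho i -> wo_le u t.
Proof.
case=> c [[X0t _ _] ct _] yc; case=> c' [[_ _ u_min] c'u _] zc' yz.
apply: u_min => //; have := distD z c' t; have := distD y z t.
have := distD c y t; rewrite (distC c' z) (distC z y); lra.
Qed.

Let cell_sep t u i y z : cell t i y -> cell u i z -> p (y - z) < rho i -> t = u.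
Proof.
move=> yti zui yz; apply: wo_le_anti _ (cell_index_le yti zui yz).
by apply: cell_index_le zui yti _; rewrite distC.
Qed.

Lemma cells_locally_finite x : exists2 d, 0 < d & exists s : seq (X * nat),
  forall t i y, cell t i y -> p (y - x) < d -> (t, i) \in s.
Proof.
have [s [n xsn]] := cells_cover x.
have [e e_gt0 ball_sub] := cell_open xsn.
have [j rhoj_lt] := rho_small e_gt0.
pose k := maxn n j; exists (rho k.+2) => //.
have rho_kj : rho k <= rho j by apply: rho_le; exact: leq_maxr.
(* The centre of a late cell meeting the ball would lie in the cell of [x]. *)
have index_le t i y : cell t i y -> p (y - x) < rho k.+2 -> (i <= k)%N.
  case=> c [_ _ c_uncovered] yc yx; rewrite leqNgt; apply/negP => ki.
  apply: c_uncovered; apply/coveredP; exists n, s; split.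
    by apply: leq_ltn_trans ki; exact: leq_maxl.
  apply: ball_sub; have := distD y c x; rewrite (distC c y).
  have := rho_le ki; have := rho_halfS k.+1; have := rho_halfS k.
  have := rho_gt0 k.+2; lra.
pose meets i : set X := [set t | exists2 y, cell t i y & p (y - x) < rho k.+2].
pose g i := xget 0 (meets i).
exists [seq (g i, i) | i <- iota 0 k.+1] => t i y yti yx.
have [z zgi zx] : meets i (g i) by apply: xgetPex; exists t, y.
have ik := index_le _ _ _ yti yx.
have -> : t = g i.
  apply: cell_sep yti zgi _; have := distD x y z; rewrite (distC x z).
  have := rho_le (leqW ik); have := rho_halfS k.+1; lra.
by apply/mapP; exists i; rewrite // mem_iota.
Qed.

End RudinCover.

Section DistCompl.
Context (R : realType) (X : lmodType R) (p : X -> R).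
Hypothesis p_seminorm : seminorm p.

(* Truncated at 1 so that the infimum is over a nonempty set when A = setT. *)
Definition dist_compl (A : set X) (x : X) : R :=
  inf [set v | v = 1 \/ exists2 z, ~ A z & v = p (x - z)].

Let dist_compl_set_lb A x :
  lbound [set v | v = 1 \/ exists2 z, ~ A z & v = p (x - z)] 0.
Proof. by move=> v [->|[z _ ->]]; [exact: ler01 | exact: seminorm_ge0]. Qed.

Let dist_compl_le A x v :
  (v = 1 \/ exists2 z, ~ A z & v = p (x - z)) -> dist_compl A x <= v.
Proof. by apply: ge_inf; exists 0; exact: dist_compl_set_lb. Qed.

Let dist_compl_ge A x c : c <= 1 ->
  (forall z, ~ A z -> c <= p (x - z)) -> c <= dist_compl A x.
Proof.
move=> c_le1 c_le; apply: lb_le_inf; first by exists 1; left.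
by move=> v [->|[z Az ->]]; last exact: c_le.
Qed.

Lemma dist_compl_ge0 A x : 0 <= dist_compl A x.
Proof. by apply: dist_compl_ge => // z _; exact: seminorm_ge0. Qed.

Lemma dist_compl_out A x : ~ A x -> dist_compl A x = 0.
Proof.
move=> Ax; apply/eqP; rewrite eq_le dist_compl_ge0 andbT.
by rewrite -(seminorm0 p_seminorm) -(subrr x); apply: dist_compl_le; right; exists x.
Qed.

Lemma dist_compl_gt0 A x :
  (exists2 d, 0 < d & forall z, p (z - x) < d -> A z) -> 0 < dist_compl A x.
Proof.
case=> d d_gt0 ball_sub; apply: (@lt_le_trans _ _ (Num.min d 1)).
  by rewrite lt_min d_gt0 ltr01.
apply: dist_compl_ge => [|z Az]; first by rewrite ge_min lexx orbT.
rewrite ge_min (seminorm_distC p_seminorm) leNgt; apply/orP; left.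
by apply/negP => /ball_sub.
Qed.

Lemma dist_compl_lipschitz A x y : dist_compl A x <= p (x - y) + dist_compl A y.
Proof.
rewrite -lerBlDl; apply: lb_le_inf; first by exists 1; left.
move=> v [->|[z Az ->]].
  by rewrite lerBlDl ler_wpDl ?seminorm_ge0 //; apply: dist_compl_le; left.
rewrite lerBlDl (le_trans _ (seminorm_distD p_seminorm y x z)) //.
by apply: dist_compl_le; right; exists z.
Qed.

End DistCompl.

Lemma fsbig_setT_seq (I : choiceType) (M : nmodType) (s : seq I) (F : I -> M) :
  uniq s -> (forall i, i \notin s -> F i = 0) ->
  \sum_(i \in [set: I]) F i = \sum_(i <- s) F i.
Proof.
move=> s_uniq s_supp; rewrite fsbig_supp (fsbig_fwiden s) //.
  by move=> i [_ /= Fi_neq0]; apply/negPn/negP => /s_supp.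
by move=> i [_ Fi] /=; apply: contrapT => Fi_neq0; exact: Fi.
Qed.

Lemma defining_seminorm_ball_nbhs (R : realType) (X : tvsType R)
    (A : set (X -> R)) (p : X -> R) :
  defining_seminorms A -> A p ->
  forall (x : X) (e : R), 0 < e -> nbhs x [set y | p (y - x) < e].
Proof.
move=> [_ A_nbhs] Ap x e e_gt0; apply/A_nbhs; exists [set p], e.
by split=> [|q ->|//|y /(_ p erefl)] //; exact: finite_set1.
Qed.

Section ContinuousSeminorm.
Context (R : realType) (X : tvsType R) (p : X -> R).
Hypothesis p_seminorm : seminorm p.
Hypothesis p_ball_nbhs :
  forall (x : X) (e : R), 0 < e -> nbhs x [set y | p (y - x) < e].

Lemma seminorm_ball_open (c : X) (e : R) : open [set y | p (y - c) < e].
Proof.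
rewrite openE => y /= yc; have e_gt0 : 0 < e - p (y - c) by rewrite subr_gt0.
apply: filterS (p_ball_nbhs y e_gt0) => z /= zy.
by have := seminorm_distD p_seminorm y z c; lra.
Qed.

Lemma dense_seminorm_net (D : set X) (e : R) : dense D -> 0 < e ->
  forall x, exists2 t, D t & p (x - t) < e.
Proof.
move=> D_dense e_gt0 x.
have [|t [/= tx Dt]] := D_dense _ _ (seminorm_ball_open x e).
  by exists x; rewrite /= subrr (seminorm0 p_seminorm).
by exists t; rewrite // (seminorm_distC p_seminorm).
Qed.

Lemma dist_compl_continuous (A : set X) : continuous (dist_compl p A).
Proof.
move=> x; apply/cvgrPdist_lt => e e_gt0; apply: filterS (p_ball_nbhs x e_gt0).
move=> y /= yx; have := dist_compl_lipschitz p_seminorm A x y.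
have := dist_compl_lipschitz p_seminorm A y x.
by rewrite (seminorm_distC p_seminorm x) ltr_norml => ? ?; apply/andP; split; lra.
Qed.

End ContinuousSeminorm.

Section NetApproximation.
Context (R : realType) (X : tvsType R) (p : X -> R) (X0 : set X) (r : R).
Hypotheses (p_seminorm : seminorm p) (r_gt0 : 0 < r).
Hypothesis p_ball_nbhs :
  forall (x : X) (e : R), 0 < e -> nbhs x [set y | p (y - x) < e].
Hypothesis X0_net : forall x, exists2 t, X0 t & p (x - t) < r.

Let weight (k : X * nat) (x : X) : R := dist_compl p (cell p X0 r k.1 k.2) x.

Definition net_approx (x : X) : X :=
  (\sum_(k \in [set: X * nat]) weight k x)^-1 *:
  \sum_(k \in [set: X * nat]) weight k x *: k.1.

Let weight_ge0 k x : 0 <= weight k x.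
Proof. exact: (dist_compl_ge0 p_seminorm). Qed.

Let weight_neq0 k x : weight k x != 0 -> cell p X0 r k.1 k.2 x.
Proof. by move=> /eqP w_neq0; apply: contrapT => /(dist_compl_out p_seminorm). Qed.

Let weight_support k x : weight k x != 0 -> X0 k.1 /\ p (x - k.1) < r.
Proof. by move=> /weight_neq0; exact: cell_sub_ball. Qed.

Let weights_locally_finite (x : X) : exists2 s : seq (X * nat), uniq s &
  nbhs x [set y | forall k, k \notin s -> weight k y = 0].
Proof.
have [d d_gt0 [s s_cells]] := cells_locally_finite p_seminorm r_gt0 X0_net x.
exists (undup s); first exact: undup_uniq.
apply: filterS (p_ball_nbhs x d_gt0) => y /= yx k; rewrite mem_undup.
by apply: contraNeq; case: k => t i /weight_neq0 /s_cells; exact.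
Qed.

Let weight_sum_gt0 x : 0 < \sum_(k \in [set: X * nat]) weight k x.
Proof.
have [s s_uniq /nbhs_singleton s_supp] := weights_locally_finite x.
have [t [n xtn]] := cells_cover p_seminorm r_gt0 X0_net x.
have w_gt0 : 0 < weight (t, n) x.
  by apply: (dist_compl_gt0 p_seminorm); exact: cell_open xtn.
have tn_in_s : (t, n) \in s.
  by apply: contraT => /s_supp w_eq0; rewrite w_eq0 ltxx in w_gt0.
rewrite (fsbig_setT_seq s_uniq s_supp) (big_rem _ tn_in_s) /=.
by rewrite ltr_wpDr // sumr_ge0.
Qed.

Lemma net_approx_continuous : continuous net_approx.
Proof.
move=> x; have [s s_uniq s_supp] := weights_locally_finite x.
pose W y := \sum_(k <- s) weight k y.
pose V y := \sum_(k <- s) weight k y *: k.1.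
have net_approxE : {near x, (fun y => (W y)^-1 *: V y) =1 net_approx}.
  apply: filterS s_supp => y y_supp; rewrite /net_approx !(fsbig_setT_seq s_uniq) //.
  by move=> k /y_supp ->; rewrite scale0r.
rewrite /continuous_at -(nbhs_singleton net_approxE).
apply: cvg_trans (near_eq_cvg net_approxE) _.
have Wx_neq0 : W x != 0.
  rewrite gt_eqF // /W -(fsbig_setT_seq s_uniq (nbhs_singleton s_supp)).
  exact: weight_sum_gt0.
have W_cont : continuous W.
  apply: continuous_big => [|k _]; first exact: add_continuous.
  exact: (dist_compl_continuous p_seminorm p_ball_nbhs).
have V_cont : continuous V.
  apply: continuous_big => [|k _ y]; first exact: add_continuous.
  apply: continuous2_cvg; first exact: (scale_continuous (_ : R^o, _)).
    exact: (dist_compl_continuous p_seminorm p_ball_nbhs).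
  exact: cvg_cst.
apply: continuous2_cvg; first exact: (scale_continuous (_ : R^o, _)).
  exact: cvgV Wx_neq0 (W_cont x).
exact: V_cont.
Qed.

Lemma net_approx_in_X0 x : linear_subspace X0 -> X0 (net_approx x).
Proof.
case=> X00 X0D X0Z; apply: (X0Z); apply: (big_ind X0) => // k _.
have [->|/weight_support [X0k _]] := eqVneq (weight k x) 0; first by rewrite scale0r.
exact: X0Z.
Qed.

Lemma net_approx_close x : p (x - net_approx x) <= r.
Proof.
have [s s_uniq /nbhs_singleton s_supp] := weights_locally_finite x.
have W_gt0 := weight_sum_gt0 x.
rewrite /net_approx !(fsbig_setT_seq s_uniq) // in W_gt0 *; last first.
  by move=> k /s_supp ->; rewrite scale0r.
set W := \sum_(k <- s) _ in W_gt0 *.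
have <- : W^-1 *: \sum_(k <- s) weight k x *: (x - k.1) =
          x - W^-1 *: \sum_(k <- s) weight k x *: k.1.
  rewrite (eq_bigr (fun k => weight k x *: x - weight k x *: k.1)) => [|k _].
    by rewrite sumrB -scaler_suml scalerBr scalerA mulVf ?scale1r // lt0r_neq0.
  exact: scalerBr.
rewrite (seminormZ p_seminorm) gtr0_norm ?invr_gt0 // ler_pdivrMl //.
rewrite /W mulr_suml; apply: le_trans (seminorm_sum p_seminorm _ _) (ler_sum _ _) => k _.
rewrite (seminormZ p_seminorm) ger0_norm //.
have [->|/weight_support [_ xk]] := eqVneq (weight k x) 0; first by rewrite !mul0r.
by rewrite ler_wpM2l // ltW.
Qed.

End NetApproximation.

Theorem theorem3p20 (R : realType) (Omega : topologicalType) (X : tvsType R)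
  (A : set (X -> R)) (X0 : set X) :
  defining_seminorms A -> linear_subspace X0 -> dense X0 ->
  (paracompact Omega /\ hausdorff_space Omega) \/ separable X ->
  forall (eps : R) (p : X -> R) (f : Omega -> X),
    0 < eps -> A p -> continuous f ->
    exists g : Omega -> X,
      [/\ continuous g, (forall t, X0 (g t)) &
          (ereal_sup [set (p (f t - g t))%:E | t in [set: Omega]] < eps%:E)%E].
Proof.
move=> A_def X0_subspace X0_dense _ eps p f eps_gt0 Ap f_cont.
have p_seminorm := A_def.1 p Ap.
have p_ball_nbhs := defining_seminorm_ball_nbhs A_def Ap.
have r_gt0 : 0 < eps / 2 by rewrite divr_gt0.
have X0_net := dense_seminorm_net p_seminorm p_ball_nbhs X0_dense r_gt0.
exists (net_approx p X0 (eps / 2) \o f); split.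
- move=> t; apply: continuous_comp; first exact: f_cont.
  exact: net_approx_continuous.
- by move=> t; exact: net_approx_in_X0.
- apply: (@le_lt_trans _ _ (eps / 2)%:E); last by rewrite lte_fin; lra.
  apply: ge_ereal_sup => _ [t _ <-]; rewrite lee_fin.
  exact: net_approx_close.
Qed.
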